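(* Let $(X,\mathbf h,\Lambda,\widetilde B)$ be a quantum seed, $i\neq j\in[1,n]$, and let $\mathbb L_0^{\vee\vee}=\mathbb{ZP}[X_k^{\pm1}\mid k\in[1,n]\setminus\{i,j\}]$. Let $f_1,f_2\in\bigoplus_{k\in[1,m]\setminus\{i,j\}}\mathbb Z e_k$ satisfy $\Lambda(f_1,e_k)=\Lambda(f_2,e_k)=0$ for all $k\in[1,m]\setminus\{i,j\}$. Let $N,N_1$ be positive integers and $$V_1=\prod_{l=1}^{N}\Big(\sum_{r=0}^{s_l}\xi_{l,r}X(rf_1)\Big),\qquad V_2=\prod_{l=1}^{N_1}\Big(\sum_{r=0}^{t_l}\zeta_{l,r}X(rf_2)\Big),$$ with $s_l,t_l\ge0$, coefficients $\xi_{l,r},\zeta_{l,r}\in\mathbb Z[q^{\pm1/2}]$, and $\xi_{l,s_l}=\zeta_{l,t_l}=1$ for all $l$. If $f_1$ and $f_2$ are $\mathbb Z$-linearly independent, then $V_1$ and $V_2$ are coprime in the center of $\mathbb L_0^{\vee\vee}$ (i.e. they have no common non-invertible divisor in that commutative ring).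
   Context: Notation: $[a,b]=\{a,a+1,\dots,b\}$; $[x]_+=\max(x,0)$, applied entrywise to vectors; $e_1,\dots,e_m$ is the standard basis of $\mathbb Z^m$. Fix integers $m\ge n\ge 1$. A compatible pair $(\Lambda,\widetilde B)$ consists of an $m\times n$ integer matrix $\widetilde B=(b_{kl})$ and a skew-symmetric $m\times m$ integer matrix $\Lambda=(\lambda_{kl})$ such that $\Lambda\widetilde B=-\begin{bmatrix}D\\0\end{bmatrix}$ for some $D=\mathrm{diag}(\tilde d_1,\dots,\tilde d_n)$ with all $\tilde d_k\in\mathbb Z_{>0}$. Write $\Lambda(a,b)=a^T\Lambda b$. Fix positive integers $d_1,\dots,d_n$ such that $d_k$ divides every entry of the $k$-th column $b^k$ of $\widetilde B$; $\beta^k=\frac1{d_k}b^k$. The quantum torus $\mathcal T(\Lambda)$ is the $\mathbb Z[q^{\pm1/2}]$-algebra with basis $\{X(c)\mid c\in\mathbb Z^m\}$ and multiplication $X(c)X(d)=q^{\frac12\Lambda(c,d)}X(c+d)$; $\mathcal F$ is its skew field of fractions, and $X_k=X(e_k)$. For each $k\in[1,n]$, $\mathbf h_k=(h_{k,0},\dots,h_{k,d_k})$ with $h_{k,r}\in\mathbb Z[q^{\pm1/2}]$, $h_{k,r}=h_{k,d_k-r}$, $h_{k,0}=h_{k,d_k}=1$; $\mathbf h=(\mathbf h_1,\dots,\mathbf h_n)$. A quantum seed $(X,\mathbf h,\Lambda,\widetilde B)$ consists of these data with $X$ the map $c\mapsto X(c)$. $\mathbb{ZP}$ is the ring of Laurent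 polynomials in $X_{n+1},\dots,X_m$ with coefficients in $\mathbb Z[q^{\pm1/2}]$; for $Y_1,\dots,Y_s\in\mathcal F$, $\mathbb{ZP}[Y_1,\dots,Y_s]$ is the subring of $\mathcal F$ generated by $\mathbb{ZP}$ and the $Y_k$ (exponent $\pm1$ means both $Y$ and $Y^{-1}$ are adjoined). *)

From HB Require Import structures.
From mathcomp Require Import all_boot all_order all_algebra.
From mathcomp Require Import finmap.
From mathcomp Require Import monalg.
Set Implicit Arguments. Unset Strict Implicit. Unset Printing Implicit Defensive.
Import Order.TTheory GRing.Theory Num.Theory.
Local Open Scope ring_scope.

(* Z[q^{1/2}, q^{-1/2}] : finitely supported int -> int; key a stands for q^{a/2}. *)
Definition ZQ := {malg int[int]}.
Definition zq1 : ZQ := << (0%R : int) >>.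

(* The quantum torus T(Lambda) for an m x m matrix Lambda, as a free Z-module
   with basis q^{a/2} X(c), (a, c) in Z x Z^m.  Key (a, c) = q^{a/2} X(c). *)
Definition qtorus (m : nat) := {malg int[(int * 'rV[int]_m)%type]}.

Definition lam m (L : 'M[int]_m) (a b : 'rV[int]_m) : int := (a *m L *m b^T) 0 0.

Definition tmul m (L : 'M[int]_m) (g h : qtorus m) : qtorus m :=
  \sum_(u <- msupp g) \sum_(v <- msupp h)
     << (g@_u * h@_v) *g (u.1 + v.1 + lam L u.2 v.2, u.2 + v.2) >>.

Definition tone m : qtorus m := << ((0%R : int), (0 : 'rV[int]_m)) >>.

Definition Xt m (c : 'rV[int]_m) : qtorus m := << ((0%R : int), c) >>.

Definition sc m (p : ZQ) : qtorus m :=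
  \sum_(a <- msupp p) << p@_a *g (a, (0 : 'rV[int]_m)) >>.

Definition ev m (k : 'I_m) : 'rV[int]_m := delta_mx 0 k.

(* The subring  L0vv = ZP[X_k^{+-1} | k in [1,n] \ {i,j}]  of T(Lambda)
   (hence of F): the subring generated by Z[q^{+-1/2}], X_k^{+-1} for the frozen
   indices k >= n (0-based), and X_k^{+-1} for k < n, k <> i, j.
   (X_k^{-1} = X(-e_k) in T(Lambda).) *)
Inductive inL0 m (L : 'M[int]_m) (n i j : nat) : qtorus m -> Prop :=
| inL0_sc : forall p, inL0 L n i j (sc m p)
| inL0_frozen : forall k : 'I_m, (n <= k)%N -> inL0 L n i j (Xt (ev k))
| inL0_frozen_inv : forall k : 'I_m, (n <= k)%N -> inL0 L n i j (Xt (- ev k))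
| inL0_mut : forall k : 'I_m, (k < n)%N -> (val k != i) -> (val k != j) ->
    inL0 L n i j (Xt (ev k))
| inL0_mut_inv : forall k : 'I_m, (k < n)%N -> (val k != i) -> (val k != j) ->
    inL0 L n i j (Xt (- ev k))
| inL0_add : forall x y, inL0 L n i j x -> inL0 L n i j y -> inL0 L n i j (x + y)
| inL0_opp : forall x, inL0 L n i j x -> inL0 L n i j (- x)
| inL0_mul : forall x y, inL0 L n i j x -> inL0 L n i j y ->
    inL0 L n i j (tmul L x y).

Definition inCenterL0 m (L : 'M[int]_m) (n i j : nat) (z : qtorus m) : Prop :=
  inL0 L n i j z /\ forall y, inL0 L n i j y -> tmul L z y = tmul L y z.

Definition coprime_in_center m (L : 'M[int]_m) (n i j : nat) (x y : qtorus m) : Prop :=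
  forall d, inCenterL0 L n i j d ->
    (exists a, inCenterL0 L n i j a /\ x = tmul L d a) ->
    (exists b, inCenterL0 L n i j b /\ y = tmul L d b) ->
    exists e, inCenterL0 L n i j e /\ tmul L d e = tone m.

Definition compatible_pair m n (L : 'M[int]_m) (B : 'M[int]_(m, n)) : Prop :=
  L^T = - L /\
  exists D : 'I_n -> int, (forall l, 0 < D l) /\
    forall (k : 'I_m) (l : 'I_n),
      (L *m B) k l = if val k == val l then - D l else 0.

Definition seed_data m n (L : 'M[int]_m) (B : 'M[int]_(m, n))
  (d : 'I_n -> nat) (h : 'I_n -> seq ZQ) : Prop :=
  (1 <= n)%N /\ (n <= m)%N /\ compatible_pair L B /\
  (forall l, (0 < d l)%N) /\
  (forall (k : 'I_m) (l : 'I_n), ((d l)%:Z %| B k l)%Z) /\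
  (forall l, size (h l) = (d l).+1) /\
  (forall l r, (r <= d l)%N -> nth 0 (h l) r = nth 0 (h l) (d l - r)) /\
  (forall l, nth 0 (h l) 0 = zq1 /\ nth 0 (h l) (d l) = zq1).

(* V1 and V2 are products of polynomials in X(f1), resp. X(f2), so their exponents lie on
   the rays N f1 and N f2, which are Λ-orthogonal to the generators X_k^{±1}, k ∉ {i, j},
   of L0; hence V1 and V2 are central.
   For coprimality, order the basis q^{a/2} X(c) of the quantum torus totally by
   (ψ(c), c lexicographically, ±a) for an additive functional ψ.  The order is
   compatible with multiplication, so leading terms multiply.  Let d a = V1 and
   d b = V2 in the center.  Every additive ψ vanishing on f1 vanishes on the exponents
   of V1; comparing leading terms for ψ and -ψ shows that ψ is constant on the
   exponents of d.  The same holds for f2, so by independence of f1 and f2 all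
   exponents of d coincide.  For ψ = <f1, ->, V1 has the same leading term X(R f1)
   for both tie-breaks on the power of q, which forces d to be a single term
   ±q^{a/2} X(c); its inverse ±q^{-a/2} X(-c) is again central. *)

From mathcomp Require Import all_boot all_order all_algebra.
From mathcomp Require Import finmap.
From mathcomp Require Import monalg.
From mathcomp Require Import zify ring.
Set Implicit Arguments. Unset Strict Implicit. Unset Printing Implicit Defensive.
Import Order.TTheory GRing.Theory Num.Theory.
Local Open Scope ring_scope.

Lemma morphMn (U V : zmodType) (f : U -> V) :
  {morph f : a b / a + b} -> forall a r, f (a *+ r) = f a *+ r.
Proof.
move=> fD a r; have f0 : f 0 = 0 by apply/(addrI (f 0)); rewrite -fD !addr0.
by elim: r => [|r IH]; rewrite ?mulr0n ?f0 // !mulrS fD IH.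
Qed.

Section Lambda.
Variables (m : nat) (L : 'M[int]_m).

Lemma lamDl a b c : lam L (a + b) c = lam L a c + lam L b c.
Proof. by rewrite /lam !mulmxDl mxE. Qed.

Lemma lamDr a b c : lam L a (b + c) = lam L a b + lam L a c.
Proof. by rewrite /lam linearD /= mulmxDr mxE. Qed.

Lemma lam0l c : lam L 0 c = 0.
Proof. by rewrite /lam !mul0mx mxE. Qed.

Lemma lam0r c : lam L c 0 = 0.
Proof. by rewrite /lam trmx0 mulmx0 mxE. Qed.

Lemma lamNl a c : lam L (- a) c = - lam L a c.
Proof. by apply/eqP; rewrite -addr_eq0 -lamDl addNr lam0l. Qed.

Lemma lamNr a c : lam L c (- a) = - lam L c a.
Proof. by apply/eqP; rewrite -addr_eq0 -lamDr addNr lam0r. Qed.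

Lemma lamMnl a c r : lam L (a *+ r) c = lam L a c *+ r.
Proof. exact: (morphMn (fun a b => lamDl a b c)). Qed.

Lemma lamMnr a c r : lam L c (a *+ r) = lam L c a *+ r.
Proof. exact: (morphMn (lamDr c)). Qed.

Lemma lamZr (z : int) a c : lam L c (z *: a) = z * lam L c a.
Proof. by rewrite /lam linearZ /= -scalemxAr mxE. Qed.

Lemma lam_sumr I (r : seq I) (P : pred I) F c :
  lam L c (\sum_(i <- r | P i) F i) = \sum_(i <- r | P i) lam L c (F i).
Proof. exact: (big_morph (lam L c) (lamDr c) (lam0r c)). Qed.

Hypothesis L_skew : L^T = - L.

Lemma lamC a b : lam L a b = - lam L b a.
Proof.
rewrite /lam; transitivity (((a *m L *m b^T)^T) 0 0); first by rewrite [RHS]mxE.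
by rewrite !trmx_mul trmxK L_skew mulNmx mulmxN mulmxA mxE.
Qed.

Lemma lamxx a : lam L a a = 0.
Proof. by apply/eqP; rewrite -eqNr -lamC. Qed.

End Lambda.

Section QuantumTorus.
Variables (m : nat) (L : 'M[int]_m).
Local Notation K := (int * 'rV[int]_m)%type.
Local Notation T := (qtorus m).

Definition keyM (u v : K) : K := (u.1 + v.1 + lam L u.2 v.2, u.2 + v.2).

Lemma tmulEw (D1 D2 : {fset K}) (g h : T) :
  (msupp g `<=` D1)%fset -> (msupp h `<=` D2)%fset ->
  tmul L g h = \sum_(u <- D1) \sum_(v <- D2) << g@_u * h@_v *g keyM u v >>.
Proof.
move=> le1 le2; rewrite /tmul (big_fset_incl _ le1) /=.
  apply/eq_bigr=> u _; apply/big_fset_incl => // v _ /mcoeff_outdom ->.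
  by rewrite mulr0 monalgU0.
move=> u _ /mcoeff_outdom gu.
by rewrite big1 => // v _; rewrite gu mul0r monalgU0.
Qed.

Lemma tmulUU x y u v : tmul L << x *g u >> << y *g v >> = << x * y *g keyM u v >>.
Proof. by rewrite (tmulEw msuppU_le msuppU_le) !big_seq_fset1 !mcoeffUU. Qed.

Lemma tmul0g g : tmul L 0 g = 0.
Proof. by rewrite /tmul msupp0 big_seq_fset0. Qed.

Lemma tmulg0 g : tmul L g 0 = 0.
Proof. by rewrite /tmul msupp0; apply: big1 => u _; rewrite big_seq_fset0. Qed.

Lemma tmulDl g1 g2 h : tmul L (g1 + g2) h = tmul L g1 h + tmul L g2 h.
Proof.
have s1 : (msupp g1 `<=` msupp g1 `|` msupp g2)%fset by apply: fsubsetUl.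
have s2 : (msupp g2 `<=` msupp g1 `|` msupp g2)%fset by apply: fsubsetUr.
rewrite (tmulEw (msuppD_le g1 g2) (fsubset_refl _)) (tmulEw s1 (fsubset_refl _)).
rewrite (tmulEw s2 (fsubset_refl _)) -big_split /=; apply: eq_bigr => u _.
rewrite -big_split /=; apply: eq_bigr => v _.
by rewrite mcoeffD mulrDl monalgUD.
Qed.

Lemma tmul_suml I (r : seq I) (P : pred I) F h :
  tmul L (\sum_(i <- r | P i) F i) h = \sum_(i <- r | P i) tmul L (F i) h.
Proof.
exact: (big_morph (fun g => tmul L g h) (fun a b => tmulDl a b h) (tmul0g h)).
Qed.

Lemma mcoeff_tmul g h w : (tmul L g h)@_w =
  \sum_(u <- msupp g) \sum_(v <- msupp h) (g@_u * h@_v) *+ (keyM u v == w).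
Proof.
rewrite /tmul raddf_sum; apply: eq_bigr => u _; rewrite raddf_sum.
by apply: eq_bigr => v _ /=; rewrite mcoeffU.
Qed.

Lemma tmulC_lam g h :
  {in msupp g & msupp h, forall u v, lam L u.2 v.2 = lam L v.2 u.2} ->
  tmul L g h = tmul L h g.
Proof.
move=> lamC; apply/malgP => w.
rewrite [LHS]mcoeff_tmul [RHS]mcoeff_tmul exchange_big /=.
apply: eq_big_seq => v vh; apply: eq_big_seq => u ug.
by rewrite mulrC /keyM lamC // (addrC u.1) (addrC u.2).
Qed.

Lemma sc_monomial (c a : int) : sc m << c *g a >> = << c *g (a, 0 : 'rV[int]_m) >>.
Proof.
rewrite /sc msuppU; have [->|c0] := eqVneq c 0; first by rewrite big_seq_fset0 monalgU0.
by rewrite big_seq_fset1 mcoeffUU.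
Qed.

Lemma tone_sc : tone m = sc m zq1.
Proof. by rewrite /zq1 sc_monomial. Qed.

Lemma tmul_monomialX (g : int) (w : K) c :
  tmul L << g *g w >> (Xt c) = << g *g keyM w (0, c) >>.
Proof. by rewrite /Xt tmulUU mulr1. Qed.

Lemma tmul_Xmonomial (g : int) (w : K) c :
  tmul L (Xt c) << g *g w >> = << g *g keyM (0, c) w >>.
Proof. by rewrite /Xt tmulUU mul1r. Qed.

Lemma tmulXX a b : tmul L (Xt a) (Xt b) = << 1 *g (lam L a b, a + b) >>.
Proof. by rewrite /Xt tmulUU mulr1 /keyM /= add0r. Qed.

Lemma tmul_sc_monomial (c a : int) (w : K) :
  tmul L (sc m << c *g a >>) << 1 *g w >> = << c *g (a + w.1, w.2) >>.
Proof. by rewrite sc_monomial tmulUU mulr1 /keyM /= lam0l addr0 add0r. Qed.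

Lemma tmul_scX p c :
  tmul L (sc m p) (Xt c) = \sum_(a <- msupp p) << p@_a *g (a, c) >>.
Proof.
rewrite /sc tmul_suml; apply: eq_bigr => a _.
by rewrite /Xt tmulUU mulr1 /keyM /= lam0l !addr0 add0r.
Qed.

Lemma mcoeff_tmul_scX p c w :
  (tmul L (sc m p) (Xt c))@_w = p@_(w.1) *+ (w.2 == c).
Proof.
rewrite tmul_scX raddf_sum; case: w => [b c'] /=.
have [->|ne] := eqVneq c' c; last first.
  rewrite mulr0n big1 // => a _.
  by rewrite mcoeffU xpair_eqE (eq_sym c) (negPf ne) andbF.
rewrite mulr1n [in RHS](monalgE p) raddf_sum; apply: eq_bigr => a _ /=.
by rewrite !mcoeffU xpair_eqE eqxx andbT.
Qed.

End QuantumTorus.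

Lemma monomial_inj (X : choiceType) (g : int) (u v : X) :
  g != 0 -> << g *g u >> = << g *g v >> :> {malg int[X]} -> u = v.
Proof.
move=> g0 /(congr1 (mcoeff u)); rewrite mcoeffUU mcoeffU.
by case: eqP => // _ /eqP; rewrite (negPf g0).
Qed.


Section Support.
Variables (m : nat) (L : 'M[int]_m).
Local Notation K := (int * 'rV[int]_m)%type.
Local Notation T := (qtorus m).

Definition supp_in (P : K -> Prop) (x : T) := {in msupp x, forall w, P w}.

Lemma supp_in0 P : supp_in P 0.
Proof. by move=> w; rewrite msupp0 in_fset0. Qed.

Lemma supp_inD P x y : supp_in P x -> supp_in P y -> supp_in P (x + y).
Proof.
by move=> Px Py w /(fsubsetP (msuppD_le x y)); rewrite in_fsetU => /orP[/Px|/Py].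
Qed.

Lemma supp_inN P x : supp_in P x -> supp_in P (- x).
Proof. by move=> Px w; rewrite msuppN; apply: Px. Qed.

Lemma supp_inU P (c : int) u : P u -> supp_in P << c *g u >>.
Proof. by move=> Pu w /(fsubsetP msuppU_le); rewrite in_fset1 => /eqP ->. Qed.

Lemma supp_in_sum P I (r : seq I) (Q : pred I) (F : I -> T) :
  (forall i, Q i -> supp_in P (F i)) -> supp_in P (\sum_(i <- r | Q i) F i).
Proof. by move=> PF; apply: big_ind => //; [exact: supp_in0|exact: supp_inD]. Qed.

Lemma supp_in_tmul (P Q R : K -> Prop) x y :
  supp_in P x -> supp_in Q y -> (forall u v, P u -> Q v -> R (keyM L u v)) ->
  supp_in R (tmul L x y).
Proof.
move=> Px Qy PQR; rewrite /tmul big_seq; apply: supp_in_sum => u /Px Pu.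
rewrite big_seq; apply: supp_in_sum => v /Qy Qv.
exact: supp_inU (PQR _ _ Pu Qv).
Qed.

End Support.

Section L0.
Variables (m : nat) (L : 'M[int]_m) (n i j : nat).
Local Notation K := (int * 'rV[int]_m)%type.
Local Notation T := (qtorus m).
Local Notation inL := (inL0 L n i j).

Definition offij (c : 'rV[int]_m) :=
  forall k : 'I_m, val k = i \/ val k = j -> c 0 k = 0.

Lemma offij0 : offij 0.
Proof. by move=> k _; rewrite mxE. Qed.

Lemma offijD a b : offij a -> offij b -> offij (a + b).
Proof. by move=> oa ob k hk; rewrite mxE oa ?ob ?addr0. Qed.

Lemma offijN a : offij a -> offij (- a).
Proof. by move=> oa k hk; rewrite mxE oa ?oppr0. Qed.

Lemma offijMn a r : offij a -> offij (a *+ r).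
Proof.
move=> oa; elim: r => [|r IH]; first by rewrite mulr0n; exact: offij0.
by rewrite mulrS; exact: offijD.
Qed.

Lemma offij_ev (k : 'I_m) : val k != i -> val k != j -> offij (ev k).
Proof.
move=> ki kj k' /= k'ij; rewrite /ev mxE /=; case: eqP => // kk'; subst k'.
by case: k'ij => /eqP; rewrite ?(negPf ki) ?(negPf kj).
Qed.

Lemma inL0_XD a b : inL (Xt a) -> inL (Xt b) -> inL (Xt (a + b)).
Proof.
move=> La Lb.
have -> : Xt (a + b) = tmul L (sc m << 1 *g - lam L a b >>) (tmul L (Xt a) (Xt b)).
  by rewrite tmulXX tmul_sc_monomial /= addNr.
by apply: inL0_mul; [apply: inL0_sc|apply: inL0_mul].
Qed.

Lemma inL0_X0 : inL (Xt 0).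
Proof. by have := inL0_sc L n i j zq1; rewrite -tone_sc. Qed.

Lemma inL0_XMn c r : inL (Xt c) -> inL (Xt (c *+ r)).
Proof.
move=> Lc; elim: r => [|r IH]; first by rewrite mulr0n; exact: inL0_X0.
by rewrite mulrS; apply: inL0_XD.
Qed.

Lemma inL0_Xev (k : 'I_m) : val k != i -> val k != j ->
  inL (Xt (ev k)) /\ inL (Xt (- ev k)).
Proof.
move=> ki kj; case: (leqP n k) => nk.
  by split; [apply: inL0_frozen|apply: inL0_frozen_inv].
by split; [apply: inL0_mut|apply: inL0_mut_inv].
Qed.

Lemma inL0_X c : offij c -> inL (Xt c).
Proof.
move=> oc; rewrite [c]row_sum_delta.
apply: (big_ind (fun c => inL (Xt c))); [exact: inL0_X0|exact: inL0_XD|move=> k _].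
have [kij|] := boolP ((val k == i) || (val k == j)).
  by rewrite oc ?scale0r; [exact: inL0_X0|case/orP: kij => /eqP; auto].
rewrite negb_or => /andP[ki kj]; have [Lk Lk'] := inL0_Xev ki kj.
rewrite -[c 0 k]intz scaler_int; case: (c 0 k) => r.
  by have -> : 'e_k *~ Posz r = ev k *+ r by []; apply: inL0_XMn.
by rewrite NegzE mulrNz -mulNrz -/(ev k); apply: inL0_XMn.
Qed.

Lemma inL0_monomial (c : int) (w : K) : offij w.2 -> inL << c *g w >>.
Proof.
case: w => a v /= ov.
have -> : << c *g (a, v) >> = tmul L (sc m << c *g a >>) (Xt v).
  by rewrite /Xt tmul_sc_monomial /= addr0.
by apply: inL0_mul; [apply: inL0_sc|apply: inL0_X].
Qed.

Definition lam_orth (c : 'rV[int]_m) :=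
  forall k : 'I_m, val k != i -> val k != j -> lam L c (ev k) = 0.

Lemma lam_orth_offij c c' : lam_orth c -> offij c' -> lam L c c' = 0.
Proof.
move=> oc oc'; rewrite [c']row_sum_delta lam_sumr big1 // => k _; rewrite lamZr.
have [kij|] := boolP ((val k == i) || (val k == j)).
  by rewrite oc' ?mul0r //; case/orP: kij => /eqP; auto.
by rewrite negb_or => /andP[ki kj]; rewrite -/(ev k) oc ?mulr0.
Qed.

Hypothesis L_skew : L^T = - L.

Lemma central_monomial_lam_orth (g : int) (w : K) :
  g != 0 -> inCenterL0 L n i j << g *g w >> -> lam_orth w.2.
Proof.
move=> g0 [_ central] k ki kj; have [Xk _] := inL0_Xev ki kj.
have /(monomial_inj g0)/(congr1 fst) :
    << g *g keyM L w (0, ev k) >> = << g *g keyM L (0, ev k) w >>.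
  by rewrite -tmul_monomialX -tmul_Xmonomial; apply: central.
rewrite /= add0r addr0 (lamC L_skew (ev k)) => /addrI /esym/eqP.
by rewrite eqNr => /eqP.
Qed.

Hypotheses (lt_i_n : (i < n)%N) (lt_j_n : (j < n)%N).

Lemma inL0_offij z : inL z -> supp_in (fun w => offij w.2) z.
Proof.
have frozen (k : 'I_m) : (n <= k)%N -> offij (ev k).
  by move=> nk; apply: offij_ev; rewrite gtn_eqF ?(leq_trans _ nk).
elim=> {z}.
- move=> p; rewrite /sc; apply: supp_in_sum => a _.
  by apply: supp_inU; exact: offij0.
- by move=> k /frozen ok; apply: supp_inU.
- by move=> k /frozen ok; apply: supp_inU; apply: offijN.
- by move=> k _ ki kj; apply: supp_inU; apply: offij_ev.
- by move=> k _ ki kj; apply: supp_inU; apply/offijN/offij_ev.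
- by move=> x y _ ox _ oy; apply: supp_inD.
- by move=> x _ ox; apply: supp_inN.
- by move=> x y _ ox _ oy; apply: (supp_in_tmul ox oy) => u v; apply: offijD.
Qed.

Lemma inL0P z : inL z <-> supp_in (fun w => offij w.2) z.
Proof.
split; first exact: inL0_offij.
move=> oz; rewrite (monalgE z) big_seq.
apply: (big_ind inL); [|exact: inL0_add|by move=> w /oz; apply: inL0_monomial].
by have := inL0_sc L n i j 0; rewrite /sc msupp0 big_seq_fset0.
Qed.

Lemma inCenterL0_supp z :
  supp_in (fun w => offij w.2 /\ lam_orth w.2) z -> inCenterL0 L n i j z.
Proof.
move=> oz; split; first by apply/inL0P => w /oz[].
move=> y /inL0P oy; apply: tmulC_lam => u v /oz [_ ou] /oy ov.
by rewrite (lamC L_skew v.2) !lam_orth_offij ?oppr0.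
Qed.

End L0.


Lemma ltxi_mapD (I : Type) (r : seq I) (F G H : I -> int) :
  ([seq F k | k <- r] < [seq G k | k <- r] :> seqlexi int)%O ->
  ([seq F k + H k | k <- r] < [seq G k + H k | k <- r] :> seqlexi int)%O.
Proof.
elim: r => [|k r IH] /=; first by rewrite ltxx.
by rewrite !ltxi_cons !lerD2r => /andP[-> /implyP FG]; apply/implyP => /FG /IH.
Qed.

Section KeyOrder.
Variables (m : nat) (L : 'M[int]_m) (psi : 'rV[int]_m -> int) (sg : int).
Hypotheses (psiD : {morph psi : a b / a + b}) (sg_neq0 : sg != 0).
Local Notation K := (int * 'rV[int]_m)%type.
Local Notation T := (qtorus m).

Definition coord (c : 'rV[int]_m) (o : option 'I_m) : int :=
  if o is Some k then c 0 k else psi c.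

Definition lexkey (c : 'rV[int]_m) : seqlexi int :=
  [seq coord c o | o <- None :: map Some (enum 'I_m)].

Lemma lexkey_inj : injective lexkey.
Proof.
move=> a b /eq_in_map eq_ab; apply/rowP => k.
by apply: (eq_ab (Some k)); rewrite inE map_f ?mem_enum.
Qed.

Lemma lexkey_ltD a b c :
  (lexkey a < lexkey b)%O -> (lexkey (a + c) < lexkey (b + c))%O.
Proof.
have coordD x : coord (x + c) =1 fun o => coord x o + coord c o.
  by case=> [k|] /=; rewrite ?mxE ?psiD.
by rewrite /lexkey !(eq_map (coordD _)); apply: ltxi_mapD.
Qed.

Lemma lexkey_lt_psi a b : (lexkey a < lexkey b)%O -> psi a <= psi b.
Proof. exact: ltxi_lehead. Qed.

Lemma psi_lt_lexkey a b : psi a < psi b -> (lexkey a < lexkey b)%O.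
Proof. by move=> lt_ab; rewrite /lexkey /= ltxi_cons (ltW lt_ab) (lt_geF lt_ab). Qed.

(* A total order on keys, compatible with keyM, that refines ψ on exponents; sg
   chooses the direction of the tie-break on the power of q. *)
Definition ltk (u v : K) :=
  (lexkey u.2 < lexkey v.2)%O || (u.2 == v.2) && (sg * u.1 < sg * v.1).

Lemma ltkxx u : ltk u u = false.
Proof. by rewrite /ltk !ltxx andbF. Qed.

Lemma ltk_trans u v w : ltk u v -> ltk v w -> ltk u w.
Proof.
rewrite /ltk => /orP[uv|/andP[/eqP-> uv]] /orP[vw|/andP[/eqP<- vw]].
- by rewrite (lt_trans uv vw).
- by rewrite uv.
- by rewrite vw.
- by rewrite eqxx (lt_trans uv vw) orbT.
Qed.

Lemma ltk_total u v : u = v \/ ltk u v \/ ltk v u.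
Proof.
rewrite /ltk; case: (ltgtP (lexkey u.2) (lexkey v.2)) => [||/lexkey_inj e2]; auto.
rewrite e2 eqxx /=; case: (ltgtP (sg * u.1) (sg * v.1)); auto.
by move/(mulfI sg_neq0) => e1; left; case: u v e1 e2 => ? ? [? ?] /= -> ->.
Qed.

Lemma ltk_keyMl u u' v : ltk u u' -> ltk (keyM L u v) (keyM L u' v).
Proof.
rewrite /ltk /= => /orP[lt_uu'|/andP[/eqP-> lt_uu']]; first by rewrite lexkey_ltD.
by rewrite ltxx eqxx /= !mulrDr !ltrD2r.
Qed.

Lemma ltk_keyMr u v v' : ltk v v' -> ltk (keyM L u v) (keyM L u v').
Proof.
rewrite /ltk /= => /orP[lt_vv'|/andP[/eqP-> lt_vv']].
  by rewrite ![u.2 + _]addrC lexkey_ltD.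
by rewrite ltxx eqxx /= !mulrDr -!addrA ltrD2l ltrD2r.
Qed.

Lemma ltk_psi u v : ltk u v -> psi u.2 <= psi v.2.
Proof. by case/orP=> [/lexkey_lt_psi|/andP[/eqP-> _]]. Qed.

Lemma psi_lt_ltk u v : psi u.2 < psi v.2 -> ltk u v.
Proof. by move/psi_lt_lexkey; rewrite /ltk => ->. Qed.

Lemma ltk_eq2 u v : u.2 = v.2 -> ltk u v = (sg * u.1 < sg * v.1).
Proof. by move=> e2; rewrite /ltk e2 ltxx eqxx. Qed.

Lemma ltk_neq2 u v : ltk u v -> u.2 != v.2 -> (lexkey u.2 < lexkey v.2)%O.
Proof. by case/orP=> // /andP[->]. Qed.

Lemma ltk_neq u v : ltk u v -> u != v.
Proof. by apply: contraTneq => ->; rewrite ltkxx. Qed.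

Definition is_lead (x : T) (t : K) :=
  x@_t != 0 /\ supp_in (fun w => w = t \/ ltk w t) x.

Lemma is_lead_in x t : is_lead x t -> t \in msupp x.
Proof. by case; rewrite mcoeff_neq0. Qed.

Lemma is_lead_uniq x t t' : is_lead x t -> is_lead x t' -> t = t'.
Proof.
move=> [tx lead] [t'x lead']; rewrite !mcoeff_neq0 in tx t'x.
case: (lead' _ tx) => // t_t'; case: (lead _ t'x) => // t'_t.
by have := ltk_trans t_t' t'_t; rewrite ltkxx.
Qed.

Lemma lead_psi x t w : is_lead x t -> w \in msupp x -> psi w.2 <= psi t.2.
Proof. by case=> _ lead /lead [->|/ltk_psi]. Qed.

Lemma lead_fst x t w : is_lead x t -> w \in msupp x -> w.2 = t.2 ->
  sg * w.1 <= sg * t.1.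
Proof. by case=> _ lead /lead [->//|]; move=> + e2; rewrite ltk_eq2 // => /ltW. Qed.

Lemma seq_ltk_max (s : seq K) w0 : w0 \in s ->
  exists2 t, t \in s & {in s, forall w, w = t \/ ltk w t}.
Proof.
elim: s w0 => // a s IH w0 _; case: s IH => [_|b s IH].
  by exists a; rewrite ?mem_seq1 // => w; rewrite mem_seq1 => /eqP; left.
have [t ts max_t] := IH b (mem_head b s).
have [<-|[ta|at_]] := ltk_total t a.
- by exists t; rewrite ?mem_head // => w; rewrite inE => /orP[/eqP|/max_t]; auto.
- exists a; rewrite ?mem_head // => w; rewrite inE => /orP[/eqP|/max_t]; first by left.
  by case=> [->|/ltk_trans]; auto.
- exists t; first by rewrite inE ts orbT.
  by move=> w; rewrite inE => /orP[/eqP->|/max_t]; auto.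
Qed.

Lemma exists_lead x : x != 0 -> exists t, is_lead x t.
Proof.
move=> x0; have [x00|[w wx]] := fset_0Vmem (msupp x).
  by move: x0; rewrite (monalgE x) x00 big_seq_fset0 eqxx.
have [t tx max_t] := seq_ltk_max (s := msupp x) wx.
by exists t; split; rewrite ?mcoeff_neq0.
Qed.

Lemma lead_tmul x y tx ty : is_lead x tx -> is_lead y ty ->
  (tmul L x y)@_(keyM L tx ty) = x@_tx * y@_ty /\
  is_lead (tmul L x y) (keyM L tx ty).
Proof.
move=> [x0 lead_x] [y0 lead_y].
have below u v : u \in msupp x -> v \in msupp y -> (u, v) != (tx, ty) ->
    ltk (keyM L u v) (keyM L tx ty).
  move=> /lead_x [->|ux] /lead_y [->|vy]; rewrite ?eqxx // => _.
  - exact: ltk_keyMr.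
  - exact: ltk_keyMl.
  - exact: ltk_trans (ltk_keyMl _ ux) (ltk_keyMr _ vy).
have off u v : u \in msupp x -> v \in msupp y -> (u, v) != (tx, ty) ->
    (keyM L u v == keyM L tx ty) = false.
  by move=> ux vy uv; apply/negbTE/ltk_neq/below.
have coef : (tmul L x y)@_(keyM L tx ty) = x@_tx * y@_ty.
  rewrite mcoeff_tmul (bigD1_seq tx) ?fset_uniq -?mcoeff_neq0 //=.
  rewrite (bigD1_seq ty) ?fset_uniq -?mcoeff_neq0 //= eqxx mulr1n.
  rewrite big_seq_cond big1 ?addr0 => [|v /andP[vy vty]]; last first.
    by rewrite off ?mulr0n // -?mcoeff_neq0 // xpair_eqE negb_and vty orbT.
  rewrite big_seq_cond big1 ?addr0 // => u /andP[ux utx].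
  rewrite big_seq big1 // => v vy.
  by rewrite off ?mulr0n // xpair_eqE negb_and utx.
split=> //; split; first by rewrite coef mulf_neq0.
apply: (supp_in_tmul (P := fun u => u \in msupp x) (Q := fun v => v \in msupp y)).
- by [].
- by [].
move=> u v ux vy.
by have [[-> ->]|/(below _ _ ux vy)] := eqVneq (u, v) (tx, ty); auto.
Qed.

End KeyOrder.

Lemma lead_oppsg_exponent m psi sg (x : qtorus m) t t' :
  is_lead psi sg x t -> is_lead psi (- sg) x t' -> t'.2 = t.2.
Proof.
move=> lt lt'; have [//|ne] := eqVneq t'.2 t.2.
case: (lt) => _ /(_ t' (is_lead_in lt')) [e|/ltk_neq2 /(_ ne) lt1].
  by rewrite e eqxx in ne.
rewrite eq_sym in ne.
case: (lt') => _ /(_ t (is_lead_in lt)) [e|/ltk_neq2 /(_ ne) lt2].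
  by rewrite e eqxx in ne.
by have := lt_trans lt1 lt2; rewrite ltxx.
Qed.


Section RayFactors.
Variables (m : nat) (L : 'M[int]_m).
Local Notation K := (int * 'rV[int]_m)%type.
Local Notation T := (qtorus m).

Definition factor (p : nat -> ZQ) (s : nat) (f : 'rV[int]_m) : T :=
  \sum_(0 <= r < s.+1) tmul L (sc m (p r)) (Xt (f *+ r)).

Definition factor_prod I (r : seq I) (P : I -> nat -> ZQ) (S : I -> nat) f : T :=
  \big[tmul L/tone m]_(l <- r) factor (P l) (S l) f.

Definition on_ray (f : 'rV[int]_m) (w : K) := exists r : nat, w.2 = f *+ r.

Lemma supp_tmul_scX p c : supp_in (fun w => w.2 = c) (tmul L (sc m p) (Xt c)).
Proof. by rewrite tmul_scX; apply: supp_in_sum => a _; apply: supp_inU. Qed.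

Lemma factor_on_ray p s f : supp_in (on_ray f) (factor p s f).
Proof. by apply: supp_in_sum => r _ w /supp_tmul_scX w2; exists r. Qed.

Lemma factor_prod_on_ray I (r : seq I) P S f :
  supp_in (on_ray f) (factor_prod r P S f).
Proof.
rewrite /factor_prod; elim: r => [|l r IH].
  by rewrite big_nil; apply: supp_inU; exists 0%N; rewrite mulr0n.
rewrite big_cons; apply: (supp_in_tmul (P := on_ray f) (Q := on_ray f)) => //.
  exact: factor_on_ray.
by move=> u v [r1 e1] [r2 e2]; exists (r1 + r2)%N; rewrite /= e1 e2 mulrnDr.
Qed.

Section Lead.
Variables (psi : 'rV[int]_m -> int) (sg : int).
Hypotheses (psiD : {morph psi : a b / a + b}) (L_skew : L^T = - L).

Lemma factor_lead p s f : p s = zq1 -> 0 < psi f ->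
  is_lead psi sg (factor p s f) (0, f *+ s) /\ (factor p s f)@_(0, f *+ s) = 1.
Proof.
move=> ps_1 psi_f.
have lt_psi r : (r < s)%N -> psi (f *+ r) < psi (f *+ s).
  by move=> rs; rewrite !(morphMn psiD) ltr_pMn2l.
have ne_rs r : (r < s)%N -> (f *+ s == f *+ r) = false.
  by move=> rs; apply: contraTF (lt_psi r rs) => /eqP ->; rewrite ltxx.
have coef : (factor p s f)@_(0, f *+ s) = 1.
  rewrite /factor raddf_sum big_nat_recr //= big_nat big1 ?add0r => [|r /andP[_ rs]].
    by rewrite mcoeff_tmul_scX eqxx mulr1n ps_1 mcoeffUU.
  by rewrite mcoeff_tmul_scX /= ne_rs ?mulr0n.
split=> //; split; first by rewrite coef.
rewrite /factor big_nat; apply: supp_in_sum => r /andP[_].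
rewrite ltnS leq_eqVlt => /orP[/eqP->|rs].
  rewrite ps_1 /zq1 sc_monomial /Xt tmulUU; apply: supp_inU; left.
  by rewrite /keyM /= lam0l !add0r.
by move=> w /supp_tmul_scX w2; right; apply: psi_lt_ltk; rewrite w2 lt_psi.
Qed.

Lemma factor_prod_lead (I : eqType) (r : seq I) (P : I -> nat -> ZQ) S f :
  (forall l, l \in r -> P l (S l) = zq1) -> 0 < psi f ->
  is_lead psi sg (factor_prod r P S f) (0, f *+ \sum_(l <- r) S l) /\
  (factor_prod r P S f)@_(0, f *+ \sum_(l <- r) S l) = 1.
Proof.
move=> monic psi_f; rewrite /factor_prod; elim: r monic => [|l r IH] monic.
  rewrite !big_nil mulr0n mcoeffUU; split => //; split; rewrite ?mcoeffUU //.
  by apply: supp_inU; left.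
have monic_r l' : l' \in r -> P l' (S l') = zq1.
  by move=> lr; apply: monic; rewrite inE lr orbT.
have [lead_r coef_r] := IH monic_r.
have [lead_l coef_l] := factor_lead (monic l (mem_head l r)) psi_f.
have [coef lead] := lead_tmul L psiD lead_l lead_r.
have -> : (0, f *+ \sum_(l' <- l :: r) S l') =
    keyM L (0, f *+ S l) (0, f *+ \sum_(l' <- r) S l').
  by rewrite big_cons /keyM lamMnl lamMnr lamxx // !mul0rn !addr0 mulrnDr.
by rewrite big_cons coef coef_l coef_r mulr1.
Qed.

End Lead.
End RayFactors.


Lemma int_sqr_eq1 (x y : int) : x * y = 1 -> x * x = 1.
Proof. by rewrite mulrC => /intUnitRing.unitzPl /orP[] /eqP ->. Qed.

Definition indep2 m (f g : 'rV[int]_m) :=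
  forall x y : int, x *: f + y *: g = 0 -> x = 0 /\ y = 0.

Lemma indep2_neq0 m (f g : 'rV[int]_m) : indep2 f g -> f != 0 /\ g != 0.
Proof.
by move=> indep; split; apply/eqP => e; [have := indep 1 0|have := indep 0 1];
  rewrite e !scaler0 ?scale0r ?addr0 => /(_ erefl) [].
Qed.

(* For f != 0, c is parallel to f iff all minor2 f k l c vanish. *)
Definition minor2 m (f : 'rV[int]_m) (k l : 'I_m) (c : 'rV[int]_m) : int :=
  f 0 k * c 0 l - f 0 l * c 0 k.

Lemma minor2D m (f : 'rV[int]_m) k l : {morph minor2 f k l : a b / a + b}.
Proof. by move=> a b; rewrite /minor2 !mxE; ring. Qed.

Lemma minor2_eq0_indep m (f g c : 'rV[int]_m) : indep2 f g ->
  (forall k l, minor2 f k l c = 0) -> (forall k l, minor2 g k l c = 0) -> c = 0.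
Proof.
move=> indep mf mg.
have [f0 g0] := indep2_neq0 indep.
have [k fk] := rV0Pn _ f0; have [l gl] := rV0Pn _ g0.
have comb : (g 0 l * c 0 k) *: f + (- (f 0 k * c 0 l)) *: g = 0.
  apply/rowP => p; have := mf k p; have := mg l p; rewrite /minor2 !mxE => mgp mfp.
  transitivity (f 0 k * (g 0 l * c 0 p - g 0 p * c 0 l)
                - g 0 l * (f 0 k * c 0 p - f 0 p * c 0 k)); first by ring.
  by rewrite mgp mfp !mulr0 subr0.
have /eqP : g 0 l * c 0 k = 0 by case: (indep _ _ comb).
rewrite mulf_eq0 (negPf gl) /= => /eqP ck.
apply/rowP => p; rewrite mxE; apply/eqP.
by have := mf k p; rewrite /minor2 ck mulr0 subr0 => /eqP; rewrite mulf_eq0 (negPf fk).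
Qed.

Section Divisors.
Variables (m : nat) (L : 'M[int]_m).
Local Notation K := (int * 'rV[int]_m)%type.
Local Notation T := (qtorus m).

Lemma tmul_neq0 (d a : T) : tmul L d a != 0 -> d != 0 /\ a != 0.
Proof. by move=> da0; split; apply: contraNneq da0 => ->; rewrite ?tmul0g ?tmulg0. Qed.

(* The ψ-leading and the (-ψ)-leading keys of d a are sums of those of d and of a,
   and ψ vanishes on both. *)
Lemma divisor_psi_const (psi : 'rV[int]_m -> int) (d a : T) :
  {morph psi : x y / x + y} -> tmul L d a != 0 -> supp_in (fun w => psi w.2 = 0) (tmul L d a) ->
  {in msupp d &, forall w w', psi w.2 = psi w'.2}.
Proof.
move=> psiD da0 da_psi; have [d0 a0] := tmul_neq0 da0.
pose npsi c := - psi c.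
have npsiD : {morph npsi : x y / x + y} by move=> x y; rewrite /npsi psiD opprD.
have one0 : (1 : int) != 0 := oner_neq0 _.
have [td lead_d] := exists_lead psi one0 d0.
have [ta lead_a] := exists_lead psi one0 a0.
have [nd nlead_d] := exists_lead npsi one0 d0.
have [na nlead_a] := exists_lead npsi one0 a0.
have [_ /is_lead_in /da_psi top] := lead_tmul L psiD lead_d lead_a.
have [_ /is_lead_in /da_psi bot] := lead_tmul L npsiD nlead_d nlead_a.
rewrite /= !psiD in top bot.
have le_a : psi na.2 <= psi ta.2 := lead_psi lead_a (is_lead_in nlead_a).
suff psi_td w : w \in msupp d -> psi w.2 = psi td.2 by move=> w w' /psi_td -> /psi_td ->.
move=> wd; have := lead_psi lead_d wd; have := lead_psi nlead_d wd.
have := lead_psi nlead_d (is_lead_in lead_d); rewrite /npsi; lia.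
Qed.

Lemma divisor_exponents_eq f1 f2 (d a b : T) : indep2 f1 f2 ->
  tmul L d a != 0 -> supp_in (on_ray f1) (tmul L d a) ->
  tmul L d b != 0 -> supp_in (on_ray f2) (tmul L d b) ->
  {in msupp d &, forall w w', w.2 = w'.2}.
Proof.
move=> indep da0 da_f1 db0 db_f2 w w' wd w'd; apply/eqP; rewrite -subr_eq0; apply/eqP.
have minor_eq0 f x : tmul L d x != 0 -> supp_in (on_ray f) (tmul L d x) ->
    forall k l, minor2 f k l (w.2 - w'.2) = 0.
  move=> dx0 dx_f k l.
  have psi0 : supp_in (fun u => minor2 f k l u.2 = 0) (tmul L d x).
    move=> u /dx_f [r ->]; rewrite (morphMn (minor2D f k l)).
    by rewrite /minor2 mulrC subrr mul0rn.
  have := divisor_psi_const (minor2D f k l) dx0 psi0 wd w'd.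
  by rewrite /minor2 !mxE => /eqP; rewrite -subr_eq0 => /eqP <-; ring.
apply: (minor2_eq0_indep (c := w.2 - w'.2) indep).
  exact: minor_eq0 da0 da_f1.
exact: minor_eq0 db0 db_f2.
Qed.

Lemma homog_lead_monomial (psi : 'rV[int]_m -> int) (d : T) dp dm :
  {in msupp d &, forall w w', w.2 = w'.2} ->
  is_lead psi 1 d dp -> is_lead psi (-1) d dm -> dp.1 <= dm.1 ->
  d = << d@_dp *g dp >>.
Proof.
move=> homog lead_dp lead_dm le_dpm.
have homog_dp w : w \in msupp d -> w.2 = dp.2 := homog _ _ ^~ (is_lead_in lead_dp).
suff supp_d : (msupp d `<=` [fset dp])%fset.
  by rewrite [LHS](monalgEw supp_d) big_seq_fset1.
apply/fsubsetP => w wd; rewrite in_fset1; apply/eqP.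
have e2w := homog_dp w wd.
have := lead_fst lead_dm wd (etrans e2w (esym (homog_dp _ (is_lead_in lead_dm)))).
have := lead_fst lead_dp wd e2w; rewrite !mul1r !mulN1r lerN2 => le_wp le_mw.
have e1w : w.1 = dp.1 by lia.
by rewrite [w]surjective_pairing [RHS]surjective_pairing e1w e2w.
Qed.

(* The leading keys of d a for the two tie-breaks on the power of q coincide, so the
   extreme powers of q in d and in a have equal sums; hence they agree. *)
Lemma divisor_unit_monomial (psi : 'rV[int]_m -> int) (d a : T) t0 :
  {morph psi : x y / x + y} -> {in msupp d &, forall w w', w.2 = w'.2} ->
  is_lead psi 1 (tmul L d a) t0 -> is_lead psi (-1) (tmul L d a) t0 ->
  (tmul L d a)@_t0 = 1 ->
  exists2 g, g * g = 1 & exists t, d = << g *g t >>.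
Proof.
move=> psiD homog lead_p lead_m coef.
have [d0 a0] : d != 0 /\ a != 0.
  by apply: tmul_neq0; apply/eqP => da0; move: coef; rewrite da0 mcoeff0.
have one0 : (1 : int) != 0 := oner_neq0 _.
have mone0 : (-1 : int) != 0 by rewrite oppr_eq0.
have [dp lead_dp] := exists_lead psi one0 d0.
have [ap lead_ap] := exists_lead psi one0 a0.
have [dm lead_dm] := exists_lead psi mone0 d0.
have [am lead_am] := exists_lead psi mone0 a0.
have [coef_p /(is_lead_uniq lead_p) t0p] := lead_tmul L psiD lead_dp lead_ap.
have [_ /(is_lead_uniq lead_m) t0m] := lead_tmul L psiD lead_dm lead_am.
have e2a : am.2 = ap.2 := lead_oppsg_exponent lead_ap lead_am.
have e2d : dm.2 = dp.2 := homog _ _ (is_lead_in lead_dm) (is_lead_in lead_dp).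
have le_a : am.1 <= ap.1.
  by have := lead_fst lead_ap (is_lead_in lead_am) e2a; rewrite !mul1r.
have le_dpm : dp.1 <= dm.1.
  by have := congr1 fst t0p; have := congr1 fst t0m; rewrite /= e2a e2d; lia.
exists d@_dp; last by exists dp; apply: homog_lead_monomial lead_dp lead_dm le_dpm.
by apply: (@int_sqr_eq1 _ a@_ap); rewrite -coef_p -t0p.
Qed.

End Divisors.

Section Coprime.
Variables (m : nat) (L : 'M[int]_m) (n i j : nat).
Hypotheses (lt_i_n : (i < n)%N) (lt_j_n : (j < n)%N) (L_skew : L^T = - L).
Local Notation K := (int * 'rV[int]_m)%type.
Local Notation T := (qtorus m).

Lemma ray_central f (V : T) : offij i j f -> lam_orth L i j f ->
  supp_in (on_ray f) V -> inCenterL0 L n i j V.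
Proof.
move=> off_f orth_f Vf; apply: inCenterL0_supp => // w /Vf [r ->].
by split; [exact: offijMn|move=> k ki kj; rewrite lamMnl orth_f ?mul0rn].
Qed.

Lemma unit_monomial_invertible (g : int) (t : K) :
  g * g = 1 -> inCenterL0 L n i j << g *g t >> ->
  exists e, inCenterL0 L n i j e /\ tmul L << g *g t >> e = tone m.
Proof.
move=> gg Ct; have g0 : g != 0 by apply: contra_eq_neq gg => ->; rewrite mul0r.
have [Lt _] := Ct.
have ot : offij i j t.2.
  by apply: (inL0_offij lt_i_n lt_j_n Lt); rewrite msuppU (negPf g0) in_fset1.
have lt := central_monomial_lam_orth L_skew g0 Ct.
exists << g *g (- t.1, - t.2) >>; split.
  apply: inCenterL0_supp => //; apply: supp_inU; split; first exact: offijN.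
  by move=> k ki kj; rewrite /= lamNl lt ?oppr0.
have key0 : keyM L t (- t.1, - t.2) = (0, 0).
  by rewrite /keyM /= lamNr lamxx // oppr0 !subrr.
by rewrite tmulUU gg key0.
Qed.

Lemma coprime_in_center_rays (psi : 'rV[int]_m -> int) f1 f2 (V1 V2 : T) t0 :
  {morph psi : x y / x + y} -> indep2 f1 f2 ->
  supp_in (on_ray f1) V1 -> supp_in (on_ray f2) V2 -> V2 != 0 ->
  is_lead psi 1 V1 t0 -> is_lead psi (-1) V1 t0 -> V1@_t0 = 1 ->
  coprime_in_center L n i j V1 V2.
Proof.
move=> psiD indep V1_f1 V2_f2 V2_0 lead_p lead_m coef d Cd [a [_ da]] [b [_ db]].
have V1_0 : V1 != 0 by apply/eqP => V0; move: coef; rewrite V0 mcoeff0.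
subst V1 V2; have homog := divisor_exponents_eq indep V1_0 V1_f1 V2_0 V2_f2.
have [g gg [t dt]] := divisor_unit_monomial psiD homog lead_p lead_m coef.
by rewrite dt in Cd *; apply: unit_monomial_invertible.
Qed.

End Coprime.


Lemma rV_dot_gt0 m (f : 'rV[int]_m) : f != 0 -> 0 < (f *m f^T) 0 0.
Proof.
move=> f0; have [k fk] := rV0Pn _ f0; rewrite mxE (bigD1 k) //= ltr_pwDl //.
  by rewrite mxE -expr2 lt0r sqrf_eq0 fk sqr_ge0.
by apply: sumr_ge0 => l _; rewrite mxE -expr2 sqr_ge0.
Qed.

Lemma dotD m (f : 'rV[int]_m) :
  {morph (fun c : 'rV[int]_m => (c *m f^T) 0 0) : a b / a + b}.
Proof. by move=> a b; rewrite mulmxDl mxE. Qed.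

Unset Implicit Arguments.
Set Strict Implicit.

Theorem lemma3p2 (m n : nat) (L : 'M[int]_m) (B : 'M[int]_(m, n))
  (d : 'I_n -> nat) (h : 'I_n -> seq ZQ)
  (i j : 'I_n) (f1 f2 : 'rV[int]_m)
  (N N1 : nat) (s t : nat -> nat) (xi zeta : nat -> nat -> ZQ) :
  seed_data L B d h ->
  i != j ->
  (forall k : 'I_m, val k = val i \/ val k = val j -> f1 0 k = 0 /\ f2 0 k = 0) ->
  (forall k : 'I_m, val k != val i -> val k != val j ->
     lam L f1 (ev k) = 0 /\ lam L f2 (ev k) = 0) ->
  (0 < N)%N -> (0 < N1)%N ->
  (forall l, (l < N)%N -> xi l (s l) = zq1) ->
  (forall l, (l < N1)%N -> zeta l (t l) = zq1) ->
  (forall a b : int, a *: f1 + b *: f2 = 0 -> a = 0 /\ b = 0) ->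
  let V1 := \big[tmul L / tone m]_(0 <= l < N)
              (\sum_(0 <= r < (s l).+1) tmul L (sc m (xi l r)) (Xt (f1 *+ r))) in
  let V2 := \big[tmul L / tone m]_(0 <= l < N1)
              (\sum_(0 <= r < (t l).+1) tmul L (sc m (zeta l r)) (Xt (f2 *+ r))) in
  inCenterL0 L n i j V1 /\ inCenterL0 L n i j V2 /\
  coprime_in_center L n i j V1 V2.
Proof.
move=> [_ [_ [[L_skew _] _]]] _ f_ij f_orth _ _ xi_monic zeta_monic indep V1 V2.
have [f1_0 f2_0] := indep2_neq0 indep.
have ray1 : supp_in (on_ray f1) V1 by exact: factor_prod_on_ray.
have ray2 : supp_in (on_ray f2) V2 by exact: factor_prod_on_ray.
have monic1 l : l \in index_iota 0 N -> xi l (s l) = zq1.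
  by rewrite mem_index_iota => /xi_monic.
have monic2 l : l \in index_iota 0 N1 -> zeta l (t l) = zq1.
  by rewrite mem_index_iota => /zeta_monic.
have lead1 sg := factor_prod_lead sg (dotD f1) L_skew monic1 (rV_dot_gt0 f1_0).
have [_ coef2] := factor_prod_lead 1 (dotD f2) L_skew monic2 (rV_dot_gt0 f2_0).
have [lead1p coef1] := lead1 1; have [lead1m _] := lead1 (-1).
have V2_0 : factor_prod L (index_iota 0 N1) zeta t f2 != 0.
  by apply/eqP => V0; move: coef2; rewrite V0 mcoeff0.
have [off1 off2] : offij i j f1 /\ offij i j f2 by split=> k /f_ij[].
have [orth1 orth2] : lam_orth L i j f1 /\ lam_orth L i j f2.
  by split=> k ki kj; have [] := f_orth k ki kj.
split; last split.
- exact (ray_central (ltn_ord i) (ltn_ord j) L_skew off1 orth1 ray1).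
- exact (ray_central (ltn_ord i) (ltn_ord j) L_skew off2 orth2 ray2).
exact: coprime_in_center_rays (dotD f1) indep ray1 ray2 V2_0 lead1p lead1m coef1.
Qed.
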